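(* Let $X$ be a Polish space with compatible metric $d$, and let $(\mathcal M_n)_{n\in\mathbb{N}}$ be partitions of $X$, each consisting of at most countably many Borel sets, with $\lim_{n\to\infty}\|\mathcal M_n\|=0$. Let $\mu_n,\mu\in\mathcal P(X)$ satisfy $\mu_n(M)=\mu(M)$ for all $n$ and all $M\in\mathcal M_n$. Then $\mu_n\to\mu$ weakly. If moreover $p\in[1,\infty)$ and $\mu_n,\mu$ have finite $p$-th moments, then $\mu_n\to\mu$ in $\mathcal W_p$.
   Context: The mesh of a partition is $\|\mathcal M\|=\sup_{M\in\mathcal M}\mathrm{diam}(M)$. $\mathcal W_p^p(\alpha,\beta)=\inf_{\gamma\in\mathrm{Cpl}(\alpha,\beta)}\int d^p\,d\gamma$. *)

From HB Require Import structures.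
From mathcomp Require Import all_boot all_order all_algebra.
From mathcomp Require Import all_classical all_reals all_analysis.
Set Implicit Arguments. Unset Strict Implicit. Unset Printing Implicit Defensive.
Import Order.TTheory GRing.Theory Num.Theory.
Import numFieldNormedType.Exports.
Local Open Scope classical_set_scope.
Local Open Scope ring_scope.

Section Defs.
Context {R : realType} {disp : measure_display} {T : measurableType disp}.
Implicit Types (d : T -> T -> R).

Definition is_metric d : Prop :=
  [/\ (forall x y, 0 <= d x y),
      (forall x y, d x y = 0 <-> x = y),
      (forall x y, d x y = d y x) &
      (forall x y z, d x z <= d x y + d y z)].

Definition dball d (x : T) (e : R) : set T := [set y | d x y < e].

Definition d_open d (U : set T) : Prop :=
  forall x, U x -> exists e : R, 0 < e /\ dball d x e `<=` U.

Definition borel_of_metric d : Prop :=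
  forall A : set T, measurable A <-> <<s d_open d >> A.

Definition d_cauchy d (u : nat -> T) : Prop :=
  forall e : R, 0 < e -> exists N : nat, forall m n, (N <= m)%N -> (N <= n)%N ->
    d (u m) (u n) < e.

Definition d_converges d (u : nat -> T) (l : T) : Prop :=
  forall e : R, 0 < e -> exists N : nat, forall n, (N <= n)%N -> d (u n) l < e.

Definition d_complete d : Prop :=
  forall u, d_cauchy d u -> exists l, d_converges d u l.

Definition d_separable d : Prop :=
  exists D : set T, countable D /\
    forall x (e : R), 0 < e -> exists y, D y /\ d x y < e.

Definition polish_borel d : Prop :=
  [/\ is_metric d, borel_of_metric d, d_complete d & d_separable d].

Definition d_continuous d (f : T -> R) : Prop :=
  forall x (e : R), 0 < e -> exists del : R, 0 < del /\
    forall y, d x y < del -> `|f x - f y| < e.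

Definition weak_conv d (mu : nat -> probability T R) (nu : probability T R) : Prop :=
  forall f : T -> R, d_continuous d f -> (exists C : R, forall x, `|f x| <= C) ->
    (fun n => (\int[mu n]_x (f x)%:E)%E) @ \oo --> (\int[nu]_x (f x)%:E)%E.

Definition countable_borel_partition (P : set (set T)) : Prop :=
  [/\ (forall A, P A -> measurable A), countable P,
      \bigcup_(A in P) A = setT & trivIset P id].

Definition diam d (A : set T) : \bar R :=
  ereal_sup [set (d x y)%:E | x in A & y in A].

Definition mesh d (P : set (set T)) : \bar R := ereal_sup (diam d @` P).

Definition coupling (a b : probability T R) (g : probability (T * T)%type R) : Prop :=
  (forall A, measurable A -> g (A `*` setT) = a A) /\
  (forall B, measurable B -> g (setT `*` B) = b B).

Definition Wpp d (p : R) (a b : probability T R) : \bar R :=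
  ereal_inf [set (\int[g]_z ((d z.1 z.2) `^ p)%:E)%E | g in coupling a b].

Definition Wp d (p : R) (a b : probability T R) : \bar R :=
  ((Wpp d p a b) `^ p^-1)%E.

Definition finite_moment d (p : R) (mu : probability T R) : Prop :=
  exists x0 : T, (\int[mu]_x ((d x0 x) `^ p)%:E < +oo)%E.

End Defs.

(* Glue mu_n and nu cell by cell: on each cell A of M_n, couple mu_n restricted to
   A with nu restricted to A and renormalised.  Since mu_n(A) = nu(A), the sum of
   these products has marginals mu_n and nu, and it only pairs points lying in a
   common cell, hence at distance at most the mesh of M_n.  This bounds W_p(mu_n, nu)
   by the mesh.  For bounded continuous f the same coupling gives
   |int f dmu_n - int f dnu| <= int osc_n dnu, where osc_n(y) is the oscillation
   of f on the cell of y; osc_n -> 0 pointwise by continuity, and dominated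
   convergence concludes. *)

From HB Require Import structures.
From mathcomp Require Import all_boot all_order all_algebra.
From mathcomp Require Import all_classical all_reals all_analysis.
From mathcomp Require Import measurable_realfun ring lra.
Import Order.TTheory GRing.Theory Num.Theory.
Import numFieldNormedType.Exports.
Local Open Scope classical_set_scope.
Local Open Scope ring_scope.

Section measurable_partition.
Context {R : realType} {disp : measure_display} {T : measurableType disp}.
Implicit Types (F : nat -> set T) (P : set (set T)).

Definition measurable_partition F : Prop :=
  [/\ forall k, measurable (F k), trivIset setT F & \bigcup_k F k = setT].

Lemma measurable_partition_cover {F} : measurable_partition F -> forall x, exists k, F k x.
Proof.
case=> _ _ cF x; have [k _ xk] : (\bigcup_k F k) x by rewrite cF.
by exists k.
Qed.

Lemma measurable_partition_cell {F k k' x} : measurable_partition F ->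
  F k x -> F k' x -> k = k'.
Proof. by case=> _ tF _ xk xk'; apply: tF => //; exists x. Qed.

Lemma countable_borel_partition_enum {P} : countable_borel_partition P ->
  exists F, measurable_partition F /\ forall k, F k = set0 \/ P (F k).
Proof.
case=> mP /countable_injP[idx idx_inj] cP tP.
pose F k := if pselect (exists A, P A /\ idx A = k) is left h
  then proj1_sig (cid h) else set0.
have FP k : F k = set0 \/ P (F k) /\ idx (F k) = k.
  rewrite /F; case: pselect => [h|_]; last by left.
  by right; case: cid.
have F_idx A : P A -> F (idx A) = A.
  move=> PA; rewrite /F; case: pselect => [h|[]]; last by exists A.
  by case: cid => A' [PA' idxA'] /=; apply: idx_inj; rewrite ?inE.
exists F; split; last by move=> k; case: (FP k) => [|[]]; [left|right].
split.
- by move=> k; case: (FP k) => [->|[/mP]].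
- move=> i j _ _ [x [xi xj]].
  case: (FP i) => [Fi0|[Pi <-]]; first by rewrite Fi0 in xi.
  case: (FP j) => [Fj0|[Pj <-]]; first by rewrite Fj0 in xj.
  by congr idx; apply: tP => //; exists x.
- apply/seteqP; split => x // _.
  have : (\bigcup_(A in P) A) x by rewrite cP.
  by case=> A PA Ax; exists (idx A) => //; rewrite F_idx.
Qed.

Lemma dist_le_mesh (d : T -> T -> R) P A x y :
  P A -> A x -> A y -> ((d x y)%:E <= mesh d P)%E.
Proof.
move=> PA Ax Ay; apply: le_trans (ereal_sup_ubound _); last by exists A.
by apply: ereal_sup_ubound; exists x => //; exists y.
Qed.

End measurable_partition.

Section measure_facts.
Context {R : realType} {d : measure_display} {X : measurableType d}.
Local Open Scope ereal_scope.

Lemma mnormalize_setT1 (m : {measure set X -> \bar R}) (P : probability X R) A :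
  m setT = 1 -> mnormalize m P A = m A.
Proof. by move=> m1; rewrite /mnormalize m1 onee_eq0 /= invr1 mule1. Qed.

Lemma mul_mnormalize_mrestr (nu : probability X R) (D B : set X) (mD : measurable D) :
  measurable B -> nu D * mnormalize (mrestr nu mD) nu B = nu (B `&` D).
Proof.
move=> mB; have [nuD0|nuD0] := eqVneq (nu D) 0.
  rewrite nuD0 mul0e; apply/esym/eqP; rewrite eq_le measure_ge0 andbT -nuD0.
  by apply: le_measure; rewrite ?inE //; exact: measurableI.
have nuD_fin : nu D \is a fin_num by exact: fin_num_measure.
have restrE U : mrestr nu mD U = nu (U `&` D) by [].
rewrite /mnormalize /= !restrE setTI (negbTE nuD0) /=.
have /negbTE -> : nu D != +oo by move: nuD_fin; rewrite fin_numE => /andP[].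
rewrite /= -[in X in X * _](fineK nuD_fin) muleCA -EFinM divff ?mule1 //.
by rewrite fine_eq0.
Qed.

Lemma measure_partition_sum (m : {measure set X -> \bar R}) (F : nat -> set X) A :
  (forall k, measurable (F k)) -> trivIset setT F -> \bigcup_k F k = setT ->
  measurable A -> \sum_(0 <= k <oo) m (A `&` F k) = m A.
Proof.
move=> mF tF cF mA.
have -> : m A = m (\bigcup_k (A `&` F k)) by rewrite -setI_bigcupr cF setIT.
apply/cvg_lim => //; apply: measure_sigma_additive => [k|]; first exact: measurableI.
by move=> i j _ _ [x [[_ xi] [_ xj]]]; apply: tF => //; exists x.
Qed.

End measure_facts.

Section cell_coupling.
Context {R : realType} {disp : measure_display} {T : measurableType disp}.
Variables (mu nu : probability T R) (F : nat -> set T).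
Hypothesis partF : measurable_partition F.
Hypothesis mu_nu_cell : forall k, mu (F k) = nu (F k).
Local Open Scope ereal_scope.

Let mF k : measurable (F k). Proof. by case: partF. Qed.
Let tF : trivIset setT F. Proof. by case: partF. Qed.
Let cF : \bigcup_k F k = setT. Proof. by case: partF. Qed.

(* When nu (F k) = 0, mnormalize falls back to nu itself; harmless, as then
   mu (F k) = 0 kills the k-th term. *)
Let nu_cell k := mnormalize (mrestr nu (mF k)) nu.
Let nu_cell_setT k : nu_cell k setT = 1. Proof. exact: probability_setT. Qed.

Definition cell_coupling_measure := mseries (fun k => mrestr mu (mF k) \x nu_cell k) 0.

Lemma cell_coupling_measureX A B : measurable A -> measurable B ->
  cell_coupling_measure (A `*` B) = \sum_(0 <= k <oo) mu (A `&` F k) * nu_cell k B.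
Proof. by move=> mA mB; apply: eq_eseriesr => k _; exact: product_measure1E. Qed.

Lemma cell_coupling_measure_fst A : measurable A ->
  cell_coupling_measure (A `*` setT) = mu A.
Proof.
move=> mA; rewrite cell_coupling_measureX // -(measure_partition_sum mu _ _ mF tF cF mA).
by apply: eq_eseriesr => k _; rewrite nu_cell_setT mule1.
Qed.

Lemma cell_coupling_measure_snd B : measurable B ->
  cell_coupling_measure (setT `*` B) = nu B.
Proof.
move=> mB; rewrite cell_coupling_measureX // -(measure_partition_sum nu _ _ mF tF cF mB).
by apply: eq_eseriesr => k _; rewrite setTI mu_nu_cell mul_mnormalize_mrestr.
Qed.

Lemma cell_coupling_measure_offdiag :
  cell_coupling_measure (~` \bigcup_k (F k `*` F k)) = 0.
Proof.
rewrite /cell_coupling_measure /mseries (eq_eseriesr (g := fun=> 0)) ?eseries0 // => k _.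
have mFC : measurable (~` F k) by exact: measurableC.
have sub : ~` (\bigcup_i (F i `*` F i)) `<=` (~` F k `*` setT) `|` (setT `*` ~` F k).
  move=> [x y] xy; have [xk|] := pselect (F k x); last by left.
  have [yk|] := pselect (F k y); last by right.
  by exfalso; apply: xy; exists k.
apply/eqP; rewrite eq_le measure_ge0 andbT.
apply: le_trans (le_measure _ _ _ sub) _; rewrite ?inE.
- by apply/measurableC/bigcupT_measurable => i; exact: measurableX.
- by apply: measurableU; exact: measurableX.
apply: le_trans (measureU2 _ _ _) _; try exact: measurableX.
rewrite [X in X + _]product_measure1E // [X in _ + X]product_measure1E //.
rewrite -[X in X * _ + _]/(mu (~` F k `&` F k)) -[X in _ + X * _]/(mu (setT `&` F k)).
rewrite setTI setICl measure0 mul0e add0e.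
by rewrite mu_nu_cell mul_mnormalize_mrestr // setICl measure0.
Qed.

Lemma cell_coupling_measure_setT : cell_coupling_measure setT = 1.
Proof. by rewrite -setXTT cell_coupling_measure_fst // probability_setT. Qed.

Lemma exists_cell_coupling : exists g : probability (T * T)%type R,
  coupling mu nu g /\ g (~` \bigcup_k (F k `*` F k)) = 0.
Proof.
exists (mnormalize cell_coupling_measure (dirac point)).
have gE A : mnormalize cell_coupling_measure (dirac point) A = cell_coupling_measure A.
  exact/mnormalize_setT1/cell_coupling_measure_setT.
split; last exact: etrans (gE _) cell_coupling_measure_offdiag.
split=> A mA; apply: etrans (gE _) _.
  exact: cell_coupling_measure_fst.
exact: cell_coupling_measure_snd.
Qed.

End cell_coupling.
Arguments exists_cell_coupling {R disp T mu nu F}.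

Section integral_bounds.
Context {R : realType} {d : measure_display} {X : measurableType d}.
Local Open Scope ereal_scope.

(* No measurability is needed: the integral of a nonnegative function is the
   supremum of the integrals of the simple functions below it. *)
Lemma ge0_le_integralT_nonmeasurable (m : {measure set X -> \bar R}) {f1 f2 : X -> \bar R} :
  (forall x, 0 <= f1 x) -> (forall x, f1 x <= f2 x) ->
  \int[m]_x f1 x <= \int[m]_x f2 x.
Proof.
move=> f10 f12; have f20 x : 0 <= f2 x by exact: le_trans (f12 x).
rewrite !ge0_integralTE //; apply: ereal_sup_le => _ [h hf1 <-].
by exists h => // x; exact: le_trans (hf1 x) (f12 x).
Qed.

Lemma integral_le_null_compl {g : probability X R} {S : set X} {f : X -> \bar R} {a : R} :
  measurable S -> g (~` S) = 0 -> (0 <= a)%R -> (forall x, 0 <= f x) ->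
  (forall x, S x -> f x <= a%:E) -> \int[g]_x f x <= a%:E.
Proof.
move=> mS gSC0 a0 f0 fSa.
pose f' x := if x \in S then a%:E else +oo.
have f_le x : f x <= f' x.
  by rewrite /f'; case: ifPn => [/set_mem/fSa|_]; rewrite ?leey.
apply: le_trans (ge0_le_integralT_nonmeasurable g f0 f_le) _.
have mf' : measurable_fun setT f'.
  apply: measurable_fun_ifT => //; apply: (measurable_fun_bool true).
  rewrite setTI (_ : _ @^-1` _ = S) //; apply/seteqP; split => x /=.
    by move/set_mem.
  by move/mem_set.
rewrite (ae_eq_integral (cst a%:E)) //.
- by rewrite integral_cst // [X in _ * X]probability_setT mule1.
- exists (~` S); split => //; first exact: measurableC.
  by move=> x /= f'x Sx; apply: f'x => _; rewrite /f' mem_set.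
Qed.

End integral_bounds.

Lemma poweRV_le {R : realType} (w : \bar R) (c p : R) : 0 < p -> 0 <= c ->
  (0 <= w <= (c `^ p)%:E)%E -> (0 <= w `^ p^-1 <= c%:E)%E.
Proof.
move=> p0 c0; case: w => [w||] //= /andP[w0 wc]; last by rewrite leye_eq in wc.
rewrite !lee_fin powR_ge0 /=.
have : w `^ p^-1 <= (c `^ p) `^ p^-1.
  by apply: ge0_ler_powR; rewrite ?nnegrE ?invr_ge0 ?(ltW p0) ?powR_ge0 // -lee_fin.
by rewrite -powRrM mulfV ?gt_eqF // powRr1.
Qed.

Section Wp_cell_bound.
Context {R : realType} {disp : measure_display} {T : measurableType disp}.
Variables (d : T -> T -> R) (p : R) (mu nu : probability T R) (F : nat -> set T) (c : R).
Hypotheses (p_gt0 : 0 < p) (d_ge0 : forall x y, 0 <= d x y).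
Hypotheses (partF : measurable_partition F) (mu_nu_cell : forall k, mu (F k) = nu (F k)).
Hypothesis d_cell : forall k x y, F k x -> F k y -> d x y <= c.

Let c_ge0 : 0 <= c.
Proof.
have [k Fk] := measurable_partition_cover partF point.
exact: le_trans (d_ge0 point point) (d_cell _ _ _ Fk Fk).
Qed.

Lemma Wpp_le_cell_bound : (0 <= Wpp d p mu nu <= (c `^ p)%:E)%E.
Proof.
have [g [gmunu g0]] := exists_cell_coupling partF mu_nu_cell.
apply/andP; split.
  apply: le_ereal_inf_tmp => _ [g' _ <-].
  by apply: integral_ge0 => z _; rewrite lee_fin powR_ge0.
apply: le_trans (ereal_inf_lbound _) _; first by exists g.
apply: (integral_le_null_compl _ g0); rewrite ?powR_ge0 //.
- by apply: bigcupT_measurable => i; apply: measurableX; case: partF.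
- by move=> z; rewrite lee_fin powR_ge0.
move=> [x y] [i _ [/= xi yi]]; rewrite lee_fin.
by apply: ge0_ler_powR; rewrite ?nnegrE ?(ltW p_gt0) ?d_ge0 // (d_cell _ _ _ xi yi).
Qed.

Lemma Wp_le_cell_bound : (0 <= Wp d p mu nu <= c%:E)%E.
Proof. exact: poweRV_le Wpp_le_cell_bound. Qed.

End Wp_cell_bound.

Section bounded_integrals.
Context {R : realType} {dX dY : measure_display}.
Context {X : measurableType dX} {Y : measurableType dY}.
Local Open Scope ereal_scope.

Lemma bounded_integrable {g : probability X R} {f : X -> R} {C : R} :
  measurable_fun setT f -> (forall x, `|f x| <= C)%R -> g.-integrable setT (EFin \o f).
Proof.
move=> mf fC; apply: measurable_bounded_integrable => //.
  by rewrite [X in X < _]probability_setT ltry.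
by exists C; split; rewrite ?num_real // => M CM x _; exact: le_trans (fC x) (ltW CM).
Qed.

Lemma integral_marginal {g : probability X R} {mu : probability Y R} {pr : X -> Y}
    {f : Y -> R} {C : R} :
  measurable_fun setT pr -> (forall A, measurable A -> g (pr @^-1` A) = mu A) ->
  measurable_fun setT f -> (forall y, `|f y| <= C)%R ->
  \int[mu]_y (f y)%:E = \int[g]_x (f (pr x))%:E.
Proof.
move=> mpr gmu mf fC.
rewrite (@eq_measure_integral _ _ _ setT (pushforward g pr)); last first.
  by move=> A mA _; exact/esym/gmu.
rewrite integral_pushforward //; first exact/measurable_EFinP.
rewrite preimage_setT.
by apply: (bounded_integrable (f := f \o pr)) => [|x]; [exact: measurableT_comp|exact: fC].
Qed.

End bounded_integrals.

Lemma measurable_fun_cellwise_constant {dX dY : measure_display}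
    {X : measurableType dX} {Y : measurableType dY} (G : nat -> set X) (h : X -> Y) :
  (forall k, measurable (G k)) -> \bigcup_k G k = setT ->
  (forall k x y, G k x -> G k y -> h x = h y) -> measurable_fun setT h.
Proof.
move=> mG cG hG _ B mB; rewrite setTI.
have -> : h @^-1` B = \bigcup_k (G k `&` h @^-1` B) by rewrite -setI_bigcupl cG setTI.
apply: bigcupT_measurable => k.
have [[x [Gx Bx]]|noB] := pselect (exists x, G k x /\ B (h x)).
  suff -> : G k `&` h @^-1` B = G k by exact: mG.
  by apply/seteqP; split => [y []//|y Gy]; split => //; rewrite /preimage /= (hG k y x).
suff -> : G k `&` h @^-1` B = set0 by exact: measurable0.
by apply/seteqP; split => // y [Gy By]; apply: noB; exists y.
Qed.

Section cell_coupling_integral.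
Context {R : realType} {disp : measure_display} {T : measurableType disp}.
Context {mu nu : probability T R} {F : nat -> set T} {f h : T -> R} {C Ch : R}.
Hypotheses (partF : measurable_partition F) (mu_nu_cell : forall k, mu (F k) = nu (F k)).
Hypotheses (mf : measurable_fun setT f) (f_bounded : forall x, `|f x| <= C).
Hypotheses (mh : measurable_fun setT h) (h_bounded : forall x, 0 <= h x <= Ch).
Hypothesis f_cell_h : forall k a b, F k a -> F k b -> `|f a - f b| <= h b.
Local Open Scope ereal_scope.

Lemma integral_dist_le_cell_bound :
  `|\int[mu]_x (f x)%:E - \int[nu]_x (f x)%:E| <= \int[nu]_x (h x)%:E.
Proof.
have [g [[g_fst g_snd] g_offdiag]] := exists_cell_coupling partF mu_nu_cell.
have g_fst' A : measurable A -> g (fst @^-1` A) = mu A by move=> mA; rewrite -setXT g_fst.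
have g_snd' A : measurable A -> g (snd @^-1` A) = nu A by move=> mA; rewrite -setTX g_snd.
have h_norm x : (`|h x| <= Ch)%R.
  by have /andP[h0 hC] := h_bounded x; rewrite ger0_norm.
rewrite (integral_marginal measurable_fst g_fst' mf f_bounded).
rewrite (integral_marginal measurable_snd g_snd' mf f_bounded).
rewrite (integral_marginal measurable_snd g_snd' mh h_norm).
have mf1 : measurable_fun setT (fun z : T * T => f z.1) by exact: measurableT_comp.
have mf2 : measurable_fun setT (fun z : T * T => f z.2) by exact: measurableT_comp.
rewrite -integralB_EFin //; last 2 first.
- exact: bounded_integrable mf1 (fun z => f_bounded z.1).
- exact: bounded_integrable mf2 (fun z => f_bounded z.2).
apply: le_trans (le_abse_integral _ _ _) _ => //.
  by apply/measurable_EFinP; exact: measurable_funB.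
apply: ae_ge0_le_integral => //.
- by apply: measurableT_comp => //; apply/measurable_EFinP; exact: measurable_funB.
- by move=> z _; rewrite lee_fin; case/andP: (h_bounded z.2).
- by apply/measurable_EFinP; exact: measurableT_comp.
exists (~` \bigcup_k (F k `*` F k)); split => //.
  by apply/measurableC/bigcupT_measurable => k; apply: measurableX; case: partF.
move=> [a b] /= ab_far [k _ [/= ak bk]]; apply: ab_far => _.
by rewrite lee_fin (f_cell_h _ _ _ ak bk).
Qed.

End cell_coupling_integral.

Definition cell_osc {R : realType} {T : Type} (F : nat -> set T) (f : T -> R) (y : T) : R :=
  sup [set `|f z.1 - f z.2| | z in \bigcup_(k in [set k | F k y]) (F k `*` F k)].

Section cell_oscillation.
Context {R : realType} {disp : measure_display} {T : measurableType disp}.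
Context {F : nat -> set T} {f : T -> R} {C : R}.
Hypotheses (partF : measurable_partition F) (f_bounded : forall x, `|f x| <= C).
Local Notation cell_osc := (cell_osc F f).

Lemma cell_osc_ge {k y a b} : F k y -> F k a -> F k b -> `|f a - f b| <= cell_osc y.
Proof.
move=> yk ak bk; apply: ub_le_sup; last by exists (a, b) => //; exists k.
exists (C + C) => _ [z _ <-].
by apply: le_trans (ler_normB _ _) _; exact: lerD.
Qed.

Lemma cell_osc_le {k y e} : F k y ->
  (forall a b, F k a -> F k b -> `|f a - f b| <= e) -> cell_osc y <= e.
Proof.
move=> yk fe; apply: ge_sup; first by exists `|f y - f y|, (y, y) => //; exists k.
move=> _ [[a b] [k' yk' [/= ak' bk']] <-].
have kk' := measurable_partition_cell partF yk yk'; subst k'.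
exact: fe.
Qed.

Lemma cell_osc_bounded y : 0 <= cell_osc y <= C + C.
Proof.
have [k yk] := measurable_partition_cover partF y.
apply/andP; split; first exact: le_trans (normr_ge0 _) (cell_osc_ge yk yk yk).
apply: (cell_osc_le yk) => a b _ _.
by apply: le_trans (ler_normB _ _) _; exact: lerD.
Qed.

Lemma measurable_cell_osc : measurable_fun setT cell_osc.
Proof.
case: (partF) => mF _ cF; apply: measurable_fun_cellwise_constant mF cF _.
move=> k y y' yk y'k; rewrite /cell_osc; congr sup.
suff -> : [set k | F k y] = [set k | F k y'] by [].
apply/seteqP; split => k' /= k'y.
  by rewrite -(measurable_partition_cell partF yk k'y).
by rewrite -(measurable_partition_cell partF y'k k'y).
Qed.

End cell_oscillation.

Lemma d_continuous_measurable {R : realType} {disp : measure_display}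
    {T : measurableType disp} {d : T -> T -> R} {f : T -> R} :
  borel_of_metric d -> d_continuous d f -> measurable_fun setT f.
Proof.
move=> bor cf; apply: (measurability _ (RGenOpens.measurableE R)).
move=> _ [_ [a [b ->]] <-]; apply/bor; apply: sub_sigma_algebra.
move=> x [_ /=]; rewrite in_itv /= => /andP[ax xb].
have e0 : 0 < Num.min (f x - a) (b - f x) by rewrite lt_min !subr_gt0 ax xb.
have [del [del0 hd]] := cf x _ e0.
exists del; split => // y /hd; rewrite lt_min => /andP[ya yb]; split => //=.
rewrite in_itv /=; apply/andP; split.
  by move: ya; rewrite ltr_norml => /andP[? ?]; lra.
by move: yb; rewrite ltr_norml => /andP[? ?]; lra.
Qed.

Section shrinking_cells.
Context {R : realType} {disp : measure_display} {T : measurableType disp}.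
Variables (d : T -> T -> R) (Fs : nat -> nat -> set T) (r : nat -> R).
Variables (mu : nat -> probability T R) (nu : probability T R).
Hypotheses (partFs : forall n, measurable_partition (Fs n)).
Hypothesis mu_nu_cells : forall n k, mu n (Fs n k) = nu (Fs n k).
Hypothesis r_cvg0 : r n @[n --> \oo] --> 0.
Hypothesis d_cells : \forall n \near \oo, forall k x y, Fs n k x -> Fs n k y -> d x y <= r n.

Lemma cell_osc_cvg0 f C : d_continuous d f -> (forall x, `|f x| <= C) ->
  forall x, cell_osc (Fs n) f x @[n --> \oo] --> 0.
Proof.
move=> cf fC x; apply/cvgrPdist_le => e e0.
have [del [del0 f_del]] := cf x (e / 2) (divr_gt0 e0 (ltr0Sn _ 1)).
apply: filterS2 d_cells (cvgr_lt _ r_cvg0 _ del0) => n dn rn_del.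
have [k xk] := measurable_partition_cover (partFs n) x.
rewrite sub0r normrN ger0_norm; last by case/andP: (cell_osc_bounded (partFs n) fC x).
apply: (cell_osc_le (partFs n) xk) => a b ak bk.
have fa := f_del a (le_lt_trans (dn _ _ _ xk ak) rn_del).
have fb := f_del b (le_lt_trans (dn _ _ _ xk bk) rn_del).
have := ler_normB (f x - f b) (f x - f a).
rewrite (_ : f x - f b - (f x - f a) = f a - f b); last by ring.
lra.
Qed.

Lemma integral_cell_osc_cvg0 f C : d_continuous d f -> (forall x, `|f x| <= C) ->
  (\int[nu]_x (cell_osc (Fs n) f x)%:E)%E @[n --> \oo] --> 0%E.
Proof.
move=> cf fC.
have osc_bounded n x := cell_osc_bounded (partFs n) fC x.
have mosc n : measurable_fun setT (EFin \o cell_osc (Fs n) f).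
  exact/measurable_EFinP/(measurable_cell_osc (partFs n)).
have osc_cvg0 : {ae nu, forall x, setT x ->
    (cell_osc (Fs n) f x)%:E @[n --> \oo] --> (cst 0%E x)}.
  by apply: aeW => x _; apply/cvg_EFin; [exact: nearW|exact: cell_osc_cvg0].
have osc_dominated : {ae nu, forall x n, setT x ->
    (`|(cell_osc (Fs n) f x)%:E| <= (cst (C + C)%:E) x)%E}.
  by apply: aeW => x n _; rewrite /= lee_fin ger0_norm; case/andP: (osc_bounded n x).
have [_ _] := dominated_convergence measurableT mosc (measurable_cst _) osc_cvg0
  (finite_measure_integrable_cst nu (C + C) measurableT) osc_dominated.
by rewrite integral0.
Qed.

Lemma weak_conv_of_cells : borel_of_metric d -> weak_conv d mu nu.
Proof.
move=> bor f cf [C fC]; have mf := d_continuous_measurable bor cf.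
have nu_f_fin : (\int[nu]_x (f x)%:E)%E \is a fin_num.
  exact: integrable_fin_num (bounded_integrable mf fC).
apply/(sube_cvg0 _ nu_f_fin)/cvg_abse0P.
apply: (@squeeze_cvge _ _ _ _ (cst 0%E) _
  (fun n => \int[nu]_x (cell_osc (Fs n) f x)%:E)%E); last 2 first.
- exact: cvg_cst.
- exact: integral_cell_osc_cvg0 cf fC.
apply: nearW => n; rewrite abse_ge0 /=.
apply: (integral_dist_le_cell_bound (partFs n) (mu_nu_cells n) mf fC
  (measurable_cell_osc (partFs n)) (cell_osc_bounded (partFs n) fC)).
by move=> k a b ak bk; exact: (cell_osc_ge fC bk ak bk).
Qed.

Lemma Wp_cvg0_of_cells p : 0 < p -> (forall x y, 0 <= d x y) ->
  Wp d p (mu n) nu @[n --> \oo] --> 0%E.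
Proof.
move=> p_gt0 d_ge0.
apply: (@squeeze_cvge _ _ _ _ (cst 0%E) _ (fun n => (r n)%:E)); last 2 first.
- exact: cvg_cst.
- by apply/cvg_EFin; [exact: nearW|exact: r_cvg0].
apply: filterS d_cells => n dn.
exact: Wp_le_cell_bound p_gt0 d_ge0 (partFs n) (mu_nu_cells n) dn.
Qed.

End shrinking_cells.

Lemma mesh_cvg0_cell_bound {R : realType} {disp : measure_display}
    {T : measurableType disp} {d : T -> T -> R} {M : nat -> set (set T)}
    {Fs : nat -> nat -> set T} :
  mesh d (M n) @[n --> \oo] --> 0%E -> (forall n k, Fs n k = set0 \/ M n (Fs n k)) ->
  exists2 r : nat -> R, r n @[n --> \oo] --> 0 &
    \forall n \near \oo, forall k x y, Fs n k x -> Fs n k y -> d x y <= r n.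
Proof.
move=> /fine_cvgP[mesh_fin mesh_cvg0] FsM.
exists (fun n => fine (mesh d (M n))) => //.
apply: filterS mesh_fin => n mesh_n_fin k x y xk yk.
case: (FsM n k) => [Fnk0|MFnk]; first by rewrite Fnk0 in xk.
by rewrite -lee_fin fineK //; exact: dist_le_mesh MFnk xk yk.
Qed.

Theorem lemma2p4 (R : realType) (disp : measure_display) (T : measurableType disp)
  (d : T -> T -> R) (M : nat -> set (set T))
  (mu : nat -> probability T R) (nu : probability T R) :
  polish_borel d ->
  (forall n, countable_borel_partition (M n)) ->
  mesh d (M n) @[n --> \oo] --> 0%E ->
  (forall n A, M n A -> mu n A = nu A) ->
  weak_conv d mu nu /\
  (forall p : R, 1 <= p ->
     (forall n, finite_moment d p (mu n)) -> finite_moment d p nu ->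
     Wp d p (mu n) nu @[n --> \oo] --> 0%E).
Proof.
move=> [d_metric d_borel _ _] partM mesh_cvg0 mu_nu_M.
have [d_ge0 _ _ _] := d_metric.
have /choice[Fs FsP] := fun n => countable_borel_partition_enum (partM n).
have partFs n := (FsP n).1.
have mu_nu_cells n k : mu n (Fs n k) = nu (Fs n k).
  by case: ((FsP n).2 k) => [->|/mu_nu_M//]; rewrite !measure0.
have [r r_cvg0 d_cells] := mesh_cvg0_cell_bound mesh_cvg0 (fun n => (FsP n).2).
split; first exact: weak_conv_of_cells partFs mu_nu_cells r_cvg0 d_cells d_borel.
move=> p p_ge1 _ _.
exact: Wp_cvg0_of_cells partFs mu_nu_cells r_cvg0 d_cells _ (lt_le_trans ltr01 p_ge1) d_ge0.
Qed.
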